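(* Let $N\ge1$ be an integer, $d>0$, $0\le s_1\le s_2\le\dots\le s_N$, and let $T$ satisfy $Nd\le T<(N+1)d$. Consider the problem $$\min_{x\in\mathbb{R}^{N+1}}\ \sum_{i=1}^{N+1}x_i^2$$ subject to - $\sum_{i=1}^k x_i\ge s_k+kd$ for $1\le k\le N$, - $x_i\ge 2d$ for $2\le i\le N$, - $x_{N+1}\ge d$, - $\sum_{i=1}^{N+1}x_i=T+Nd$. Assume this problem is feasible. Then its optimal solution $x^*$ is given by $$x_1^*=\max\left\{\frac{T-(N-2)d}{2},\ \max_{1\le k\le N}\{s_k-(k-2)d\}\right\},$$ $$x_i^*=2d\quad (2\le i\le N),$$ $$x_{N+1}^*=T-(N-2)d-x_1^*.$$
   Context: This optimization problem arises from minimizing the area under the age-of-information curve of a single energy harvesting transmitter. The $s_k$ are energy arrival times, $d$ is the fixed service (transmission) time, and $T$ is the session length. The variables are $x_1=t_1+d$, $x_i=t_i-t_{i-1}+d$ for $2\le i\le N$, and $x_{N+1}=T-t_N$, where $t_i$ are the update transmission times. *)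

From mathcomp Require Import all_boot all_order all_algebra.

Import Order.TTheory GRing.Theory Num.Theory.
Local Open Scope ring_scope.

Section AoI.
Variable R : realFieldType.

(* 1-based coordinate access: xc n x i = x_i for 1 <= i <= n+1 *)
Definition xc (n : nat) (x : 'rV[R]_(n.+1)) (i : nat) : R := x 0 (inord i.-1).

Definition cost (N : nat) (x : 'rV[R]_(N.+1)) : R :=
  \sum_(1 <= i < N.+2) xc N x i ^+ 2.

(* constraints of the problem; s is indexed 1..N *)
Definition feasible (N : nat) (d T : R) (s : nat -> R) (x : 'rV[R]_(N.+1)) : Prop :=
  [/\ (forall k, (1 <= k <= N)%N -> \sum_(1 <= i < k.+1) xc N x i >= s k + k%:R * d),
      (forall i, (2 <= i <= N)%N -> xc N x i >= 2 * d),
      xc N x N.+1 >= d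
    & \sum_(1 <= i < N.+2) xc N x i = T + N%:R * d].

Definition x1star (N : nat) (d T : R) (s : nat -> R) : R :=
  Num.max ((T - (N%:R - 2) * d) / 2)
          (\big[Num.max/(s 1%N - (1 - 2) * d)]_(1 <= k < N.+1) (s k - (k%:R - 2) * d)).

(* the claimed optimal solution, as a row vector (0-based index i is x_{i+1}) *)
Definition xstar (N : nat) (d T : R) (s : nat -> R) : 'rV[R]_(N.+1) :=
  \row_(i < N.+1)
    (if (val i == 0)%N then x1star N d T s
     else if (val i == N)%N then T - (N%:R - 2) * d - x1star N d T s
     else 2 * d).

End AoI.

From mathcomp Require Import all_boot all_order all_algebra.
From mathcomp Require Import ring lra.
Import Order.TTheory GRing.Theory Num.Theory.
Local Open Scope ring_scope.

(* x* satisfies the variational inequality <x*, y - x*> >= 0 for every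
   feasible y, so |y|^2 = |x*|^2 + |y - x*|^2 + 2 <x*, y - x*> makes it the
   unique minimiser.  With D >= 0 the total excess of y_2, ..., y_N over 2d,
   equal coordinate sums give
     <x*, y - x*> = (2d - x*_1) D + (x*_1 - x*_{N+1}) (x*_{N+1} - y_{N+1}).
   The first term is nonnegative as x*_1 <= T - (N-1)d < 2d.  In the second,
   either x*_1 = x*_{N+1} = (T - (N-2)d)/2, or x*_1 is the causal bound
   max_k (s_k - (k-2)d), which exceeds x*_{N+1} and which every feasible y
   respects in the form s_k - (k-2)d <= T - (N-2)d - y_{N+1}. *)

Lemma sumr_sqr_sub [R : comPzRingType] [I : Type] (r : seq I) (x y : I -> R) :
  \sum_(i <- r) y i ^+ 2 - \sum_(i <- r) x i ^+ 2 =
  \sum_(i <- r) (y i - x i) ^+ 2 + 2 * \sum_(i <- r) x i * (y i - x i).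
Proof. by rewrite -sumrB mulr_sumr -big_split /=; apply: eq_bigr => i _; ring. Qed.

Section SumSqrMinimal.
Context {R : realDomainType} {I : eqType} {r : seq I} {x y : I -> R}.
Hypothesis inner_ge0 : 0 <= \sum_(i <- r) x i * (y i - x i).

Lemma sum_sqr_minimal : \sum_(i <- r) x i ^+ 2 <= \sum_(i <- r) y i ^+ 2.
Proof.
rewrite -subr_ge0 sumr_sqr_sub addr_ge0 ?mulr_ge0 //.
by apply: sumr_ge0 => i _; apply: sqr_ge0.
Qed.

Lemma sum_sqr_minimal_uniq :
  \sum_(i <- r) y i ^+ 2 <= \sum_(i <- r) x i ^+ 2 -> {in r, y =1 x}.
Proof.
move=> le_yx i r_i; apply/eqP; rewrite -subr_eq0 -sqrf_eq0.
have dist_ge0 : 0 <= \sum_(i <- r) (y i - x i) ^+ 2.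
  by apply: sumr_ge0 => j _; apply: sqr_ge0.
have dist_le : \sum_(i <- r) (y i - x i) ^+ 2 + 2 * \sum_(i <- r) x i * (y i - x i) <= 0.
  by rewrite -sumr_sqr_sub subr_le0.
have /eqP : \sum_(i <- r) (y i - x i) ^+ 2 = 0.
  by apply/eqP; rewrite eq_le dist_ge0 andbT (le_trans _ dist_le) // lerDl mulr_ge0.
by rewrite psumr_eq0 => [/allP/(_ i r_i)|j _]; last exact: sqr_ge0.
Qed.

End SumSqrMinimal.

Lemma big_nat_split_ends (R : nmodType) (n : nat) (F : nat -> R) : (0 < n)%N ->
  \sum_(1 <= i < n.+2) F i = F 1%N + \sum_(2 <= i < n.+1) F i + F n.+1.
Proof. by move=> n_gt0; rewrite big_nat_recr //= big_ltn // addrA. Qed.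

Lemma xc_ord [R : realFieldType] [N : nat] (x : 'rV[R]_N.+1) (j : 'I_N.+1) :
  xc R N x j.+1 = x 0 j.
Proof. by rewrite /xc inord_val. Qed.

Section Problem.
Context {R : realFieldType} {N : nat} {d T : R} {s : nat -> R}.
Hypothesis N_gt0 : (0 < N)%N.

Local Notation feas := (feasible R N d T s).
Local Notation xs := (xstar R N d T s).
Local Notation x1 := (x1star R N d T s).

Definition endpoint_budget : R := T - (N%:R - 2) * d.

Definition causal_bound : R :=
  \big[Num.max/(s 1%N - (1 - 2) * d)]_(1 <= k < N.+1) (s k - (k%:R - 2) * d).

Lemma x1starE : x1 = Num.max (endpoint_budget / 2) causal_bound.
Proof. by []. Qed.

Lemma le_causal_bound [k] : (1 <= k <= N)%N -> s k - (k%:R - 2) * d <= causal_bound.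
Proof.
by move=> k_range; apply: (le_bigmax_seq _ k); rewrite ?mem_index_iota ?ltnS.
Qed.

Lemma xstar_coord i : (1 <= i <= N.+1)%N ->
  xc R N xs i = if i == 1%N then x1
                else if i == N.+1 then endpoint_budget - x1 else 2 * d.
Proof.
move=> /andP[i_gt0 i_le]; rewrite /xc /xstar mxE.
rewrite (_ : \val (inord i.-1) = i.-1); last by apply: inordK; case: i i_gt0 i_le.
by case: i i_gt0 i_le.
Qed.

Lemma xstar_first : xc R N xs 1 = x1.
Proof. by rewrite xstar_coord. Qed.

Lemma xstar_last : xc R N xs N.+1 = endpoint_budget - x1.
Proof. by rewrite xstar_coord ?leqnn // eqSS eqn0Ngt N_gt0 eqxx. Qed.

Lemma xstar_mid i : (2 <= i <= N)%N -> xc R N xs i = 2 * d.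
Proof.
case/andP=> i_ge2 i_le; rewrite xstar_coord; last by rewrite ltnW //= leqW.
by rewrite gtn_eqF // ltn_eqF // ltnS.
Qed.

Lemma xstar_prefix_sum k : (1 <= k <= N)%N ->
  \sum_(1 <= i < k.+1) xc R N xs i = x1 + 2 * (k%:R - 1) * d.
Proof.
case/andP=> k_gt0 le_kN; rewrite big_ltn // xstar_first.
rewrite (eq_big_nat _ _ (F2 := fun=> 2 * d)) => [|i /andP[i_ge2 lt_ik]]; last first.
  by rewrite xstar_mid // i_ge2 -ltnS (leq_trans lt_ik).
by rewrite sumr_const_nat subSS -[(2 * d) *+ _]mulr_natr natrB //; ring.
Qed.

Lemma feasible_prefix_le [y k] : feas y -> (1 <= k <= N)%N ->
  \sum_(1 <= i < k.+1) xc R N y i + 2 * (N%:R - k%:R) * d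
    <= \sum_(1 <= i < N.+1) xc R N y i.
Proof.
case=> _ mid_y _ _ /andP[k_gt0 le_kN].
rewrite [X in _ <= X](big_cat_nat _ (n := k.+1)) //= lerD2l.
have : \sum_(k.+1 <= i < N.+1) 2 * d <= \sum_(k.+1 <= i < N.+1) xc R N y i.
  apply: ler_sum_nat => i /andP[lt_ki lt_iN]; apply: mid_y.
  by rewrite (leq_trans _ lt_ki) // -ltnS.
by rewrite sumr_const_nat subSS -[(2 * d) *+ _]mulr_natr natrB //; lra.
Qed.

Lemma causal_bound_le [y] : feas y -> causal_bound <= endpoint_budget - xc R N y N.+1.
Proof.
move=> fy; have [prefix_y _ _ sum_y] := fy.
have sum_head : \sum_(1 <= i < N.+1) xc R N y i = T + N%:R * d - xc R N y N.+1.
  by move: sum_y; rewrite big_nat_recr //=; lra.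
have term_le k : (1 <= k <= N)%N ->
    s k - (k%:R - 2) * d <= endpoint_budget - xc R N y N.+1.
  move=> k_range; have := prefix_y k k_range; have := feasible_prefix_le fy k_range.
  by rewrite sum_head /endpoint_budget; lra.
rewrite /causal_bound big_seq; apply: bigmax_le => [|k].
  by have := term_le 1%N; rewrite leqnn N_gt0 => /(_ isT); lra.
by rewrite mem_index_iota ltnS; apply: term_le.
Qed.

Hypothesis T_ge : N%:R * d <= T.
Hypothesis T_lt : T < N.+1%:R * d.
Hypothesis feasible_nonempty : exists y, feas y.

Lemma x1star_le : x1 <= endpoint_budget - d.
Proof.
rewrite x1starE ge_max; apply/andP; split.
  by have := T_ge; rewrite /endpoint_budget; lra.
have [y fy] := feasible_nonempty; have [_ _ last_y _] := fy.
by apply: le_trans (causal_bound_le fy) _; lra.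
Qed.

Lemma xstar_feasible : feas xs.
Proof.
split.
- move=> k k_range; rewrite xstar_prefix_sum //.
  have : causal_bound <= x1 by rewrite x1starE le_max lexx orbT.
  by have := le_causal_bound k_range; lra.
- by move=> i i_range; rewrite xstar_mid.
- by rewrite xstar_last; have := x1star_le; lra.
- rewrite big_nat_recr //= xstar_prefix_sum ?leqnn ?N_gt0 // xstar_last.
  by rewrite /endpoint_budget; lra.
Qed.

Lemma xstar_inner_ge0 [y] : feas y ->
  0 <= \sum_(1 <= i < N.+2) xc R N xs i * (xc R N y i - xc R N xs i).
Proof.
move=> fy; have [_ mid_y _ sum_y] := fy; have [_ _ _ sum_xs] := xstar_feasible.
set D := \sum_(2 <= i < N.+1) (xc R N y i - 2 * d).
have D_ge0 : 0 <= D.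
  rewrite /D big_nat; apply: sumr_ge0 => i /andP[i_ge2 lt_iN].
  by rewrite subr_ge0 mid_y // i_ge2 -ltnS.
have slack : xc R N y 1 - x1 + D + (xc R N y N.+1 - xc R N xs N.+1) = 0.
  have : \sum_(1 <= i < N.+2) (xc R N y i - xc R N xs i) = 0.
    by rewrite sumrB sum_y sum_xs subrr.
  rewrite big_nat_split_ends // xstar_first => <-; congr (_ + _ + _).
  by apply: eq_big_nat => i i_range; rewrite xstar_mid.
have -> : \sum_(1 <= i < N.+2) xc R N xs i * (xc R N y i - xc R N xs i) =
    (2 * d - x1) * D + (x1 - xc R N xs N.+1) * (xc R N xs N.+1 - xc R N y N.+1).
  rewrite big_nat_split_ends // xstar_first.
  have -> : \sum_(2 <= i < N.+1) xc R N xs i * (xc R N y i - xc R N xs i) = 2 * d * D.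
    by rewrite /D mulr_sumr; apply: eq_big_nat => i i_range; rewrite xstar_mid.
  have -> : xc R N y 1 - x1 = - D - (xc R N y N.+1 - xc R N xs N.+1) by lra.
  by ring.
rewrite addr_ge0 //.
  rewrite mulr_ge0 //.
  by have := x1star_le; have := T_lt; rewrite -natr1 /endpoint_budget; lra.
have le_last := causal_bound_le fy; rewrite xstar_last.
have [le_half|lt_half] := leP causal_bound (endpoint_budget / 2).
  by rewrite x1starE (max_l le_half) (_ : _ - (_ - _) = 0) ?mul0r //; lra.
by rewrite x1starE (max_r (ltW lt_half)); apply: mulr_ge0; lra.
Qed.

End Problem.

Theorem theorem1 (R : realFieldType) (N : nat) (d T : R) (s : nat -> R) :
  (1 <= N)%N -> 0 < d ->
  0 <= s 1%N -> (forall k, (1 <= k < N)%N -> s k <= s k.+1) ->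
  N%:R * d <= T -> T < N.+1%:R * d ->
  (exists y : 'rV[R]_(N.+1), feasible R N d T s y) ->
  feasible R N d T s (xstar R N d T s) /\
  (forall y : 'rV[R]_(N.+1), feasible R N d T s y -> cost R N (xstar R N d T s) <= cost R N y) /\
  (forall y : 'rV[R]_(N.+1), feasible R N d T s y -> cost R N y <= cost R N (xstar R N d T s) ->
     y = xstar R N d T s).
Proof.
move=> N_gt0 _ _ _ T_ge T_lt feasible_nonempty.
have inner_ge0 := xstar_inner_ge0 N_gt0 T_ge T_lt feasible_nonempty.
split; first exact: xstar_feasible.
split=> [y /inner_ge0 /sum_sqr_minimal // | y /inner_ge0 ge0 le_cost].
apply/rowP => j; rewrite -(xc_ord y) -(xc_ord (xstar R N d T s)).
by apply: (sum_sqr_minimal_uniq ge0 le_cost); rewrite mem_index_iota /= ltnS ltn_ord.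
Qed.
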